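(* Let $q\ge 4$. Every twisted cubic of $\mathrm{PG}(U_1)$ that is contained in $\mathcal O_1$ is of the form $\theta(L)$ for some $q$-order subline $L$ of $\mathrm{PG}(1,q^3)$.
   Context: $q$ is a prime power. Let $U_1\subset\mathbb F_{q^3}^8$ be the set of vectors $(a,b^{q^2},b^{q},c,b,c^{q},c^{q^2},d)$ with $a,d\in\mathbb F_q$, $b,c\in\mathbb F_{q^3}$; it is an $8$-dimensional $\mathbb F_q$-vector space, so $\mathrm{PG}(U_1)\cong\mathrm{PG}(7,q)$. For $(a,b,c,d)\ne 0$ let $P(a,b,c,d)$ be the point of $\mathrm{PG}(U_1)$ spanned by this vector. Let $\mathcal O_1=\{P(1,t,t^{q^2+q},t^{q^2+q+1}) : t\in\mathbb F_{q^3}\}\cup\{P(0,0,0,1)\}$. Let $\theta:\mathrm{PG}(1,q^3)\to\mathcal O_1$ be the bijection $\langle(1,t)\rangle\mapsto P(1,t,t^{q^2+q},t^{q^2+q+1})$, $\langle(0,1)\rangle\mapsto P(0,0,0,1)$. A $q$-order subline of $\mathrm{PG}(1,q^3)$ is the image of $\mathrm{PG}(1,q)=\{\langle(1,t)\rangle:t\in\mathbb F_q\}\cup\{\langle(0,1)\rangle\}$ under an element of $\mathrm{PGL}(2,q^3)$. *)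

From mathcomp Require Import all_boot all_order all_algebra all_field.
Set Implicit Arguments. Unset Strict Implicit. Unset Printing Implicit Defensive.
Import GRing.Theory.
Local Open Scope ring_scope.

(* F plays the role of F_{q^3}; the subfield F_q is {x | x^q = x}. *)
Definition inFq (F : fieldType) (q : nat) (x : F) : bool := x ^+ q == x.

Definition vecU1 (F : fieldType) (q : nat) (a b c d : F) : 'rV[F]_8 :=
  \row_(i < 8) nth 0 [:: a; b ^+ (q ^ 2)%N; b ^+ q; c; b; c ^+ q; c ^+ (q ^ 2)%N; d] i.

Definition inU1 (F : fieldType) (q : nat) (v : 'rV[F]_8) : Prop :=
  exists a b c d : F, [/\ inFq q a, inFq q d & v = vecU1 q a b c d].

Definition same_point (F : fieldType) (q : nat) (u v : 'rV[F]_8) : Prop :=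
  exists l : F, [/\ inFq q l, l != 0 & u = l *: v].

(* a representative vector of theta(<x>) for a nonzero x in F^2:
   <(x1,x2)> = <(1, x2/x1)> if x1 <> 0, and <(0,1)> otherwise. *)
Definition theta_vec (F : fieldType) (q : nat) (x : F * F) : 'rV[F]_8 :=
  if x.1 == 0 then vecU1 q 0 0 0 1
  else let t := x.2 / x.1 in
       vecU1 q 1 t (t ^+ (q ^ 2 + q)%N) (t ^+ (q ^ 2 + q + 1)%N).

Definition in_O1 (F : fieldType) (q : nat) (u : 'rV[F]_8) : Prop :=
  exists x : F * F, x != (0, 0) /\ same_point q u (theta_vec q x).

Definition Fq_indep4 (F : fieldType) (q : nat) (v0 v1 v2 v3 : 'rV[F]_8) : Prop :=
  forall a0 a1 a2 a3 : F, inFq q a0 -> inFq q a1 -> inFq q a2 -> inFq q a3 ->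
    a0 *: v0 + a1 *: v1 + a2 *: v2 + a3 *: v3 = 0 ->
    [/\ a0 = 0, a1 = 0, a2 = 0 & a3 = 0].

Definition cubic_vec (F : fieldType) (v0 v1 v2 v3 : 'rV[F]_8) (s t : F) : 'rV[F]_8 :=
  s ^+ 3 *: v0 + (s ^+ 2 * t) *: v1 + (s * t ^+ 2) *: v2 + t ^+ 3 *: v3.

(* A twisted cubic of PG(U_1): image of the standard one
   {<(s^3, s^2 t, s t^2, t^3)> : (s,t) in F_q^2 \ 0} under the F_q-linear map
   e_i |-> v_i, with v_0..v_3 in U_1 linearly independent over F_q
   (i.e. a normal rational curve spanning a solid of PG(U_1)). *)
Definition twisted_cubic_basis (F : fieldType) (q : nat) (v0 v1 v2 v3 : 'rV[F]_8) : Prop :=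
  [/\ inU1 q v0, inU1 q v1, inU1 q v2, inU1 q v3 & Fq_indep4 q v0 v1 v2 v3].

Definition on_cubic (F : fieldType) (q : nat) (v0 v1 v2 v3 : 'rV[F]_8) (u : 'rV[F]_8) : Prop :=
  exists s t : F, [/\ inFq q s, inFq q t, (s, t) != (0, 0)
                    & same_point q u (cubic_vec v0 v1 v2 v3 s t)].

(* image of <(s,t)> under the element of PGL(2,q^3) given by M (row convention) *)
Definition mob (F : fieldType) (M : 'M[F]_2) (s t : F) : F * F :=
  (s * M ord0 ord0 + t * M ord_max ord0, s * M ord0 ord_max + t * M ord_max ord_max).

(* u spans a point of theta(L), L the q-order subline given by M *)
Definition on_theta_subline (F : fieldType) (q : nat) (M : 'M[F]_2) (u : 'rV[F]_8) : Prop :=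
  exists s t : F, [/\ inFq q s, inFq q t, (s, t) != (0, 0)
                    & same_point q u (theta_vec q (mob M s t))].

From mathcomp Require Import all_boot all_order all_algebra all_field.
From mathcomp Require Import cyclic ring zify.
Set Implicit Arguments. Unset Strict Implicit. Unset Printing Implicit Defensive.
Import GRing.Theory.
Local Open Scope ring_scope.

(* theta is x |-> x (x) x^(q) (x) x^(q^2) in disguise, so PGL(2,q^3) acts on O_1
   through M |-> M (x) M^(q) (x) M^(q^2) compatibly with theta.  By
   3-transitivity we may assume that the cubic passes through theta(0),
   theta(oo) and theta(1) at the parameters 0, oo and 1.  The cubic then lies
   in the solid spanned by these three points and a fourth one, theta(t); as
   q >= 4 there is a fifth point, and comparing two of its coordinates forces
   t into F_q.  Hence the cubic lies in the F_q-rational solid, whose points on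
   O_1 are exactly theta(PG(1,q)), and since the parameter map of the cubic is
   injective it hits all of them. *)

Section FixedField.
Variables (F : fieldType) (q : nat).
Implicit Types (x y l : F) (u v w : 'rV[F]_8).

Definition frob x := x ^+ q.

Lemma frobM x y : frob (x * y) = frob x * frob y. Proof. exact: exprMn. Qed.
Lemma frobV x : frob x^-1 = (frob x)^-1. Proof. exact: exprVn. Qed.
Lemma frob1 : frob 1 = 1. Proof. exact: expr1n. Qed.

Definition normq x := x * frob x * frob (frob x).

Lemma inFq_frob x : inFq q x -> frob x = x. Proof. by move/eqP. Qed.

Lemma inFq1 : inFq q (1 : F). Proof. exact/eqP/frob1. Qed.

Lemma inFqM x y : inFq q x -> inFq q y -> inFq q (x * y).
Proof. by rewrite /inFq exprMn => /eqP -> /eqP ->. Qed.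

Lemma inFqV x : inFq q x -> inFq q x^-1.
Proof. by rewrite /inFq exprVn => /eqP ->. Qed.

Lemma inFq_div x y : inFq q x -> inFq q y -> inFq q (x / y).
Proof. by move=> Fx Fy; rewrite inFqM ?inFqV. Qed.

Lemma inFqX x n : inFq q x -> inFq q (x ^+ n).
Proof. by move=> Fx; elim: n => [|n IHn]; rewrite ?inFq1 // exprS inFqM. Qed.

Lemma same_point_refl u : same_point q u u.
Proof. by exists 1; rewrite scale1r oner_eq0 inFq1. Qed.

Lemma same_point_sym u v : same_point q u v -> same_point q v u.
Proof.
case=> l [Fl l_neq0 ->]; exists l^-1.
by rewrite inFqV // invr_eq0 l_neq0 scalerA mulVf ?scale1r.
Qed.

Lemma same_point_trans v u w : same_point q u v -> same_point q v w -> same_point q u w.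
Proof.
case=> l [Fl l_neq0 ->] [l' [Fl' l'_neq0 ->]].
by exists (l * l'); rewrite inFqM // mulf_neq0 // scalerA.
Qed.

Lemma same_pointZ l u : inFq q l -> l != 0 -> same_point q (l *: u) u.
Proof. by exists l. Qed.

Lemma same_point_mulmx u v (K : 'M[F]_8) :
  same_point q u v -> same_point q (u *m K) (v *m K).
Proof. by case=> l [Fl l_neq0 ->]; exists l; rewrite -scalemxAl. Qed.

End FixedField.

Arguments inFq1 {F q}.

Section Mobius.
Variable F : fieldType.
Implicit Types (s t a b : F) (x y w : F * F) (M : 'M[F]_2).

Lemma sum_ord2 (f : 'I_2 -> F) : \sum_(i < 2) f i = f ord0 + f ord_max.
Proof. by rewrite big_ord_recl big_ord1; congr (_ + f _); apply: val_inj. Qed.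

Lemma mob_mulmx M M' s t : mob M' (mob M s t).1 (mob M s t).2 = mob (M *m M') s t.
Proof. by rewrite /mob !mxE !sum_ord2 /=; congr pair; ring. Qed.

Lemma mob1 s t : mob 1%:M s t = (s, t).
Proof. by rewrite /mob !mxE /=; congr pair; ring. Qed.

Lemma mob_eq0 M s t : M \in unitmx -> (mob M s t == (0, 0)) = ((s, t) == (0, 0)).
Proof.
move=> M_unit; apply/eqP/eqP => [st0|[-> ->]]; last by rewrite /mob !mul0r addr0.
by rewrite -[(s, t)]mob1 -(mulmxV M_unit) -mob_mulmx st0 /mob !mul0r addr0.
Qed.

Lemma pair1_neq0 a : (1, a) != (0, 0) :> F * F.
Proof. by rewrite xpair_eqE oner_eq0. Qed.

Lemma pair01_neq0 : (0, 1) != (0, 0) :> F * F.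
Proof. by rewrite xpair_eqE oner_eq0 andbF. Qed.

Definition det2 x y := x.1 * y.2 - x.2 * y.1.

Definition rows2_mx x y : 'M[F]_2 :=
  \matrix_(i, j) (if i == ord0 then if j == ord0 then x.1 else x.2
                  else if j == ord0 then y.1 else y.2).

Lemma mob_rows2 x y s t : mob (rows2_mx x y) s t = (s * x.1 + t * y.1, s * x.2 + t * y.2).
Proof. by rewrite /mob !mxE. Qed.

Lemma unitmx2E M :
  (M \in unitmx) = (M ord0 ord0 * M ord_max ord_max - M ord0 ord_max * M ord_max ord0 != 0).
Proof.
rewrite unitmxE unitfE (expand_det_row _ ord0) !big_ord_recl big_ord0 addr0.
rewrite /cofactor !det_mx11 !mxE /= expr0 expr1 mul1r mulN1r mulrN.
by congr (_ * M _ _ - M _ _ * M _ _ != 0); apply: val_inj.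
Qed.

Lemma unitmx_rows2 x y : (rows2_mx x y \in unitmx) = (det2 x y != 0).
Proof. by rewrite unitmx2E !mxE. Qed.

Lemma mob_frame w1 w2 w3 :
  det2 w1 w2 != 0 -> det2 w3 w2 != 0 -> det2 w1 w3 != 0 ->
  exists M, [/\ M \in unitmx, det2 (mob M 1 0) w1 = 0, det2 (mob M 0 1) w2 = 0
              & mob M 1 1 = w3].
Proof.
(* Cramer's rule: w3 = a * w1 + b * w2 *)
move=> d12 d32 d13; set a := det2 w3 w2 / det2 w1 w2; set b := det2 w1 w3 / det2 w1 w2.
exists (rows2_mx (a * w1.1, a * w1.2) (b * w2.1, b * w2.2)).
rewrite unitmx_rows2 !mob_rows2 /det2 /= !(mul1r, mul0r, addr0, add0r).
split; try ring.
  rewrite (_ : _ - _ = a * b * det2 w1 w2); last by rewrite /det2; ring.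
  by rewrite !mulf_neq0 ?invr_eq0.
case: w3 d32 d13 @a @b => x3 y3 d32 d13 a b.
by congr pair; rewrite /a /b /det2 /=; field; move: d12; rewrite /det2.
Qed.

End Mobius.

Arguments pair01_neq0 {F}.

Section CubicSpan.
Variables (F : fieldType) (v0 v1 v2 v3 : 'rV[F]_8) (u0 : F).
Hypotheses (u0_neq0 : u0 != 0) (u0_neq1 : u0 != 1).
Implicit Types (s t : F).
Local Notation C := (cubic_vec v0 v1 v2 v3).

Definition span_coef4 s t := (s * t ^+ 2 - s ^+ 2 * t) / (u0 ^+ 2 - u0).
Definition span_coef3 s t := s ^+ 2 * t - span_coef4 s t * u0.
Definition span_coef1 s t := s ^+ 3 - span_coef3 s t - span_coef4 s t.
Definition span_coef2 s t := t ^+ 3 - span_coef3 s t - span_coef4 s t * u0 ^+ 3.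

Lemma cubic_vec_span s t :
  C s t = span_coef1 s t *: C 1 0 + span_coef2 s t *: C 0 1
          + span_coef3 s t *: C 1 1 + span_coef4 s t *: C 1 u0.
Proof.
have u0_den : u0 ^+ 2 - u0 != 0.
  by rewrite (_ : _ - _ = u0 * (u0 - 1)) ?mulf_neq0 ?subr_eq0 //; ring.
apply/rowP => i; rewrite !mxE /span_coef1 /span_coef2 /span_coef3 /span_coef4.
by field.
Qed.

End CubicSpan.

Lemma cubic_vec_mulmx (F : fieldType) (v0 v1 v2 v3 : 'rV[F]_8) (K : 'M[F]_8) s t :
  cubic_vec v0 v1 v2 v3 s t *m K = cubic_vec (v0 *m K) (v1 *m K) (v2 *m K) (v3 *m K) s t.
Proof. by rewrite /cubic_vec !mulmxDl !scalemxAl. Qed.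

Lemma finField_prim_root (F : finFieldType) n : (0 < n)%N -> (n %| #|F|.-1)%N ->
  exists z : F, n.-primitive_root z.
Proof.
move=> n_gt0 n_dvd; set m := #|F|.-1.
have m_gt0 : (0 < m)%N by rewrite /m -subn1 subn_gt0 finNzRing_gt1.
have roots : all m.-unity_root (enum (predC1 (0 : F))).
  apply/allP => x; rewrite mem_enum /= => x_neq0; rewrite unity_rootE.
  apply/eqP/(mulfI x_neq0); rewrite mulr1 -exprS prednK ?expf_card //.
  exact: ltn_trans (finNzRing_gt1 F).
have card_roots : (m <= size (enum (predC1 (0%R : F))))%N by rewrite -cardE cardC1.
have /hasP[g _ g_prim] := has_prim_root m_gt0 roots (enum_uniq _) card_roots.
by exists (g ^+ (m %/ n)); apply: dvdn_prim_root.
Qed.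

Section FiniteField.
Variables (F : finFieldType) (q : nat).
Hypothesis q_pow : exists p k : nat, [/\ prime p, (0 < k)%N & q = (p ^ k)%N].
Hypothesis card_F : #|F| = (q ^ 3)%N.
Implicit Types (x y s t l : F) (z : F * F) (M : 'M[F]_2) (v w : 'rV[F]_8).
Local Notation frob := (@frob F q).
Local Notation normq := (@normq F q).

Lemma q_gt0 : (0 < q)%N.
Proof. by case: q_pow => p [k] [p_pr _ ->]; rewrite expn_gt0 prime_gt0. Qed.

Lemma frobD x y : frob (x + y) = frob x + frob y.
Proof.
case: q_pow => p [k] [p_pr k_gt0 q_def].
have charFp : p \in [pchar F].
  by apply: (@card_finPcharP _ p (k * 3)); rewrite // card_F q_def expnM.
apply: exprDn_pchar; rewrite q_def.
by rewrite (eq_pnat _ (pcharf_eq charFp)) pnatX pnat_id.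
Qed.

Lemma frob0 : frob 0 = 0. Proof. by rewrite /frob expr0n eqn0Ngt q_gt0. Qed.

Lemma frobN x : frob (- x) = - frob x.
Proof. by apply/eqP; rewrite -subr_eq0 opprK -frobD addNr frob0. Qed.

Lemma frob_eq0 x : (frob x == 0) = (x == 0).
Proof. by rewrite /frob expf_eq0 q_gt0. Qed.

Lemma frobK3 x : frob (frob (frob x)) = x.
Proof.
rewrite /frob -!exprM.
by rewrite (_ : (q * (q * q))%N = #|F|) ?expf_card // card_F !expnS expn0 muln1.
Qed.

Lemma inFq0 : inFq q (0 : F). Proof. exact/eqP/frob0. Qed.

Lemma inFqD x y : inFq q x -> inFq q y -> inFq q (x + y).
Proof. by rewrite /inFq -!/(frob _) frobD => /eqP -> /eqP ->. Qed.

Lemma inFqN x : inFq q x -> inFq q (- x).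
Proof. by rewrite /inFq -!/(frob _) frobN => /eqP ->. Qed.

Lemma inFqB x y : inFq q x -> inFq q y -> inFq q (x - y).
Proof. by move=> Fx Fy; rewrite inFqD ?inFqN. Qed.

Lemma inFq_normq x : inFq q (normq x).
Proof. by rewrite /inFq -/(frob _) /normq !frobM frobK3 mulrC mulrA. Qed.

Definition u1vec a b c d : 'rV[F]_8 :=
  \row_(i < 8) nth 0 [:: a; frob (frob b); frob b; c; b; frob c; frob (frob c); d] i.

Lemma vecU1E a b c d : vecU1 q a b c d = u1vec a b c d.
Proof.
have frob2 x : x ^+ (q ^ 2)%N = frob (frob x) by rewrite /frob -exprM expnS expn1.
by rewrite /vecU1 /u1vec !frob2.
Qed.

Lemma u1vecD a b c d a' b' c' d' :
  u1vec a b c d + u1vec a' b' c' d' = u1vec (a + a') (b + b') (c + c') (d + d').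
Proof. by apply/rowP => -[[|[|[|[|[|[|[|[|i]]]]]]]] ?]; rewrite !mxE //= !frobD. Qed.

Lemma u1vecZ l a b c d : inFq q l ->
  l *: u1vec a b c d = u1vec (l * a) (l * b) (l * c) (l * d).
Proof.
move/inFq_frob=> frob_l.
by apply/rowP => -[[|[|[|[|[|[|[|[|i]]]]]]]] ?]; rewrite !mxE //= ?frobM ?frob_l.
Qed.

Lemma u1vec_inj a b c d a' b' c' d' : u1vec a b c d = u1vec a' b' c' d' ->
  [/\ a = a', b = b', c = c' & d = d'].
Proof.
move=> eq_u; have coord (i : 'I_8) := congr1 (fun w : 'rV[F]_8 => w ord0 i) eq_u.
move: (coord (inord 0)) (coord (inord 4)) (coord (inord 3)) (coord (inord 7)).
by rewrite !mxE !inordK.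
Qed.

Definition theta_aff t := u1vec 1 t (frob t * frob (frob t)) (normq t).

Lemma theta_vecE z :
  theta_vec q z = if z.1 == 0 then u1vec 0 0 0 1 else theta_aff (z.2 / z.1).
Proof.
rewrite /theta_vec !vecU1E /theta_aff /normq /frob.
case: ifP => // _; congr u1vec; first by rewrite exprD -exprM expnS expn1 mulrC.
by rewrite !exprD -exprM expnS expn1 expr1; ring.
Qed.

Lemma theta_vec_det2 z z' : z != (0, 0) -> z' != (0, 0) -> det2 z z' = 0 ->
  theta_vec q z = theta_vec q z'.
Proof.
case: z z' => [x y] [x' y'] nz nz' /eqP; rewrite !theta_vecE /det2 /= subr_eq0 => /eqP d0.
have [x0|x_neq0] := eqVneq x 0; have [x'0|x'_neq0] := eqVneq x' 0 => //.
- move: d0; rewrite x0 mul0r => /esym/eqP; rewrite mulf_eq0 (negbTE x'_neq0) orbF.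
  by move=> /eqP y0; move: nz; rewrite x0 y0 eqxx.
- move: d0; rewrite x'0 mulr0 => /eqP; rewrite mulf_eq0 (negbTE x_neq0) /=.
  by move=> /eqP y'0; move: nz'; rewrite x'0 y'0 eqxx.
by congr theta_aff; apply/eqP; rewrite eqr_div // -d0 mulrC.
Qed.

Lemma normq_eq0 x : (normq x == 0) = (x == 0).
Proof. by rewrite /normq !mulf_eq0 !frob_eq0 !orbb. Qed.

Definition theta_hom x y :=
  u1vec (normq x) (frob x * frob (frob x) * y) (x * frob y * frob (frob y)) (normq y).

Lemma theta_hom0 y : theta_hom 0 y = normq y *: u1vec 0 0 0 1.
Proof.
by rewrite u1vecZ ?inFq_normq // /theta_hom /normq !frob0 !(mulr0, mul0r, mulr1).
Qed.

Lemma theta_homE x y : x != 0 -> theta_hom x y = normq x *: theta_aff (y / x).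
Proof.
move=> x_neq0; have fx_neq0 : frob x != 0 by rewrite frob_eq0.
have ffx_neq0 : frob (frob x) != 0 by rewrite !frob_eq0.
rewrite /theta_aff u1vecZ ?inFq_normq // /theta_hom /normq !frobM !frobV.
by congr u1vec; field; rewrite ?x_neq0 ?fx_neq0 ?ffx_neq0.
Qed.

Lemma theta_hom_same_point z : z != (0, 0) -> same_point q (theta_hom z.1 z.2) (theta_vec q z).
Proof.
case: z => x y nz; rewrite theta_vecE /=; have [x0|x_neq0] := eqVneq x 0.
  have y_neq0 : y != 0 by apply: contra nz => /eqP y0; rewrite x0 y0.
  by rewrite x0 theta_hom0; apply: same_pointZ; rewrite ?inFq_normq ?normq_eq0.
by rewrite theta_homE //; apply: same_pointZ; rewrite ?inFq_normq ?normq_eq0.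
Qed.

Definition bit_ord (b : bool) : 'I_2 := if b then ord_max else ord0.
Definition mx_bit M (a b : bool) := M (bit_ord a) (bit_ord b).

(* Indexing the coordinates of [u1vec] by the binary digits of [i < 8], this
   is M (x) M^(q) (x) M^(q^2), just as [theta_hom x y] is w (x) w^(q) (x) w^(q^2)
   for w = (x, y). *)
Definition tensor3_mx M : 'M[F]_8 :=
  \matrix_(i, j) (mx_bit M (odd i./2./2) (odd j./2./2)
                  * frob (mx_bit M (odd i./2) (odd j./2))
                  * frob (frob (mx_bit M (odd i) (odd j)))).

Lemma theta_hom_tensor3 M x y :
  theta_hom x y *m tensor3_mx M = theta_hom (mob M x y).1 (mob M x y).2.
Proof.
apply/rowP => j; rewrite !mxE !big_ord_recl big_ord0 !mxE /=.
rewrite /mob /mx_bit /=.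
by case: j => -[|[|[|[|[|[|[|[|j]]]]]]]] ? //=; rewrite /normq ?(frobD, frobM, frobK3); ring.
Qed.

Lemma mx_bitM M M' a b :
  mx_bit (M *m M') a b = mx_bit M a false * mx_bit M' false b + mx_bit M a true * mx_bit M' true b.
Proof. by rewrite /mx_bit mxE sum_ord2. Qed.

Lemma tensor3_mxM M M' : tensor3_mx M *m tensor3_mx M' = tensor3_mx (M *m M').
Proof.
apply/matrixP => i j; rewrite !mxE !big_ord_recl big_ord0 !mxE /=.
by rewrite !mx_bitM ?(frobD, frobM, frobK3); ring.
Qed.

Lemma tensor3_mx1 : tensor3_mx 1%:M = 1%:M.
Proof.
apply/matrixP => i j; rewrite !mxE.
have mx_bit1 a b : mx_bit 1%:M a b = (a == b)%:R by case: a; case: b; rewrite /mx_bit mxE.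
rewrite !mx_bit1.
case: i => -[|[|[|[|[|[|[|[|i]]]]]]]] ? //; case: j => -[|[|[|[|[|[|[|[|j]]]]]]]] ? //=;
  by rewrite ?frob0 ?frob1 ?(mulr1, mulr0, mul0r).
Qed.

Lemma tensor3_mxV M : M \in unitmx -> tensor3_mx M *m tensor3_mx (invmx M) = 1%:M.
Proof. by move=> M_unit; rewrite tensor3_mxM mulmxV // tensor3_mx1. Qed.

Lemma theta_vec_tensor3 M z : M \in unitmx -> z != (0, 0) ->
  same_point q (theta_vec q z *m tensor3_mx M) (theta_vec q (mob M z.1 z.2)).
Proof.
move=> M_unit nz; have nz' : mob M z.1 z.2 != (0, 0) by rewrite mob_eq0 // -surjective_pairing.
apply: (same_point_trans (v := theta_hom z.1 z.2 *m tensor3_mx M)).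
  exact/same_point_mulmx/same_point_sym/theta_hom_same_point.
by rewrite theta_hom_tensor3; apply: theta_hom_same_point.
Qed.

Definition Fq_rational v :=
  exists a b c d, [/\ inFq q a, inFq q b, inFq q c, inFq q d & v = u1vec a b c d].

Lemma Fq_rationalD v w : Fq_rational v -> Fq_rational w -> Fq_rational (v + w).
Proof.
case=> [a [b [c [d [Fa Fb Fc Fd ->]]]]] [a' [b' [c' [d' [Fa' Fb' Fc' Fd' ->]]]]].
by exists (a + a'), (b + b'), (c + c'), (d + d'); rewrite u1vecD !inFqD.
Qed.

Lemma Fq_rationalZ l v : inFq q l -> Fq_rational v -> Fq_rational (l *: v).
Proof.
move=> Fl [a [b [c [d [Fa Fb Fc Fd ->]]]]].
by exists (l * a), (l * b), (l * c), (l * d); rewrite u1vecZ // !inFqM.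
Qed.

Lemma Fq_rational_theta_aff t : inFq q t -> Fq_rational (theta_aff t).
Proof.
move=> Ft; exists 1, t, (frob t * frob (frob t)), (normq t).
by split; rewrite ?inFq1 ?inFq_normq // !(inFq_frob Ft) inFqM.
Qed.

Lemma theta_aff_Fq_rational l t : inFq q l -> l != 0 ->
  Fq_rational (l *: theta_aff t) -> inFq q t.
Proof.
move=> Fl l_neq0 [a [b [c [d [Fa Fb _ _]]]]].
rewrite /theta_aff u1vecZ // mulr1 => /u1vec_inj[la lb _ _].
by rewrite (_ : t = b / a) ?inFq_div // -la -lb mulrC mulKf.
Qed.

Lemma frob_sym_free a b c t : inFq q a -> inFq q b -> inFq q c -> ~~ inFq q t ->
  a + b * (frob t + frob (frob t)) + c * (frob t * frob (frob t)) = 0 ->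
  [/\ a = 0, b = 0 & c = 0].
Proof.
move=> Fa Fb Fc Ft eq0.
have eq0' : a + b * (frob (frob t) + t) + c * (frob (frob t) * t) = 0.
  move/(congr1 frob): eq0; rewrite !(frobD, frobM) frobK3 frob0.
  by rewrite (inFq_frob Fa) (inFq_frob Fb) (inFq_frob Fc).
have : (frob t - t) * (b + c * frob (frob t)) = 0.
  by rewrite -[RHS](subrr 0) -{1}eq0 -eq0'; ring.
move/eqP; rewrite mulf_eq0 subr_eq0 -[frob t == t]/(inFq q t) (negbTE Ft) /=.
move=> /eqP bc0.
have c0 : c = 0.
  apply/eqP; apply: contraNT Ft => c_neq0.
  have Fft : inFq q (frob (frob t)).
    rewrite (_ : frob (frob t) = - b / c) ?inFq_div ?inFqN //.
    by rewrite -[b](addrK (c * frob (frob t))) bc0; field.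
  by rewrite /inFq -[t in t ^+ q]frobK3 -/(frob _) (inFq_frob Fft) frobK3.
move: bc0 eq0; rewrite c0 mul0r addr0 => ->.
by rewrite !mul0r !addr0.
Qed.

Lemma frob2_affine_cases g h t : inFq q g -> inFq q h -> ~~ inFq q t ->
  frob (g + h * t) * frob (frob (g + h * t)) = g + h * (frob t * frob (frob t)) ->
  [\/ g = 0 /\ h = 0, g = 0 /\ h = 1 | g = 1 /\ h = 0].
Proof.
move=> Fg Fh Ft; rewrite !(frobD, frobM) !(inFq_frob Fg, inFq_frob Fh) => eq_gh.
have [] : [/\ g ^+ 2 - g = 0, g * h = 0 & h ^+ 2 - h = 0].
  apply: (frob_sym_free _ _ _ Ft); rewrite ?inFqB ?inFqM ?inFqX //.
  by rewrite -[RHS](subrr (g + h * (frob t * frob (frob t)))) -{1}eq_gh; ring.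
have idem x : x ^+ 2 - x = 0 -> x = 0 \/ x = 1.
  move/eqP; rewrite (_ : _ - _ = x * (x - 1)); last by ring.
  by rewrite mulf_eq0 subr_eq0 => /orP[] /eqP; [left|right].
move=> /idem[] g01 gh /idem[] h01; rewrite g01 h01 ?(mul0r, mulr1) in gh *.
- by constructor 1.
- by constructor 2.
- by constructor 3.
- by move/eqP: gh; rewrite oner_eq0.
Qed.

Lemma Fq_two_points : (4 <= q)%N -> exists u0 u1 : F,
  [/\ inFq q u0, inFq q u1, u0 \notin [:: 0; 1], u1 \notin [:: 0; 1] & u0 != u1].
Proof.
move=> q_ge4; have q1_gt2 : (2 < q - 1)%N by rewrite ltn_subRL.
have [z z_prim] : exists z : F, (q - 1).-primitive_root z.
  apply: finField_prim_root; first by rewrite subn_gt0 (leq_trans _ q_ge4).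
  rewrite card_F (_ : (q ^ 3).-1 = (q - 1) * (q ^ 2 + q + 1))%N ?dvdn_mulr //.
  by rewrite !expnS expn0 !muln1; nia.
have Fz : inFq q z.
  by rewrite /inFq -[q in z ^+ q](subnK q_gt0) exprD (prim_expr_order z_prim) mul1r.
have z_inj i j : (i < q - 1)%N -> (j < q - 1)%N -> i != j -> z ^+ i != z ^+ j.
  by move=> ? ? ?; rewrite (eq_prim_root_expr z_prim) !modn_small.
have lt_q1 i : (i <= 2)%N -> (i < q - 1)%N by move=> ?; apply: leq_ltn_trans q1_gt2.
have z_neq0 : z != 0 by rewrite (prim_root_eq0 z_prim) -lt0n lt_q1.
have z_neq1 : z != 1 by have := z_inj 1%N 0%N (lt_q1 1%N isT) (lt_q1 0%N isT) isT; rewrite expr1.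
have z2_neq1 : z ^+ 2 != 1 by apply: z_inj 2%N 0%N (lt_q1 2%N isT) (lt_q1 0%N isT) isT.
have z_neq_z2 : z != z ^+ 2.
  by have := z_inj 1%N 2%N (lt_q1 1%N isT) (lt_q1 2%N isT) isT; rewrite expr1.
exists z, (z ^+ 2); rewrite !inE Fz inFqX // expf_eq0 /=.
by rewrite (negbTE z_neq0) (negbTE z_neq1) (negbTE z2_neq1).
Qed.

Lemma theta_aff0 : theta_aff 0 = u1vec 1 0 0 0.
Proof. by rewrite /theta_aff /normq !frob0 !mul0r. Qed.

Lemma theta_aff1 : theta_aff 1 = u1vec 1 1 1 1.
Proof. by rewrite /theta_aff /normq !frob1 !mul1r. Qed.

Lemma theta_vec_aff t : theta_vec q (1, t) = theta_aff t.
Proof. by rewrite theta_vecE /= oner_eq0 divr1. Qed.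

Lemma theta_vec_inf : theta_vec q (0, 1) = u1vec 0 0 0 1.
Proof. by rewrite theta_vecE /= eqxx. Qed.

Lemma Fq_rational_theta_vec v z : Fq_rational v -> same_point q v (theta_vec q z) ->
  exists z', [/\ inFq q z'.1, inFq q z'.2, z' != (0, 0) & theta_vec q z' = theta_vec q z].
Proof.
move=> v_rat; rewrite theta_vecE; case: ifP => [z1_0 _|z1_neq0 [l [Fl l_neq0 v_def]]].
  by exists (0, 1); rewrite inFq0 inFq1 theta_vec_inf pair01_neq0.
exists (1, z.2 / z.1); rewrite inFq1 theta_vec_aff pair1_neq0; split=> //.
by apply: (theta_aff_Fq_rational Fl l_neq0); rewrite -v_def.
Qed.

Lemma span_coef_inFq (u0 : F) s t : inFq q u0 -> inFq q s -> inFq q t ->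
  [/\ inFq q (span_coef1 u0 s t), inFq q (span_coef2 u0 s t),
      inFq q (span_coef3 u0 s t) & inFq q (span_coef4 u0 s t)].
Proof.
move=> Fu0 Fs Ft.
have F4 : inFq q (span_coef4 u0 s t) by rewrite /span_coef4 inFq_div ?inFqB ?inFqM ?inFqX.
have F3 : inFq q (span_coef3 u0 s t) := inFqB (inFqM (inFqX 2 Fs) Ft) (inFqM F4 Fu0).
split=> //; first exact: inFqB (inFqB (inFqX 3 Fs) F3) F4.
exact: inFqB (inFqB (inFqX 3 Ft) F3) (inFqM F4 (inFqX 3 Fu0)).
Qed.

Lemma Fq_indep4_mulmx v0 v1 v2 v3 (K : 'M[F]_8) : K \in unitmx ->
  Fq_indep4 q v0 v1 v2 v3 -> Fq_indep4 q (v0 *m K) (v1 *m K) (v2 *m K) (v3 *m K).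
Proof.
move=> K_unit v_free a0 a1 a2 a3 F0 F1 F2 F3 comb0; apply: v_free => //.
have comb0K : (a0 *: v0 + a1 *: v1 + a2 *: v2 + a3 *: v3) *m K = 0.
  by rewrite !mulmxDl -!scalemxAl.
by rewrite -[LHS](mulmxK K_unit) comb0K mul0mx.
Qed.

Section TwistedCubic.
Variables v0 v1 v2 v3 : 'rV[F]_8.
Hypothesis v_free : Fq_indep4 q v0 v1 v2 v3.
Local Notation C := (cubic_vec v0 v1 v2 v3).

Lemma cubic_vec_same_point s t s' t' : inFq q s -> inFq q t -> inFq q s' -> inFq q t' ->
  same_point q (C s t) (C s' t') -> s * t' = t * s'.
Proof.
move=> Fs Ft Fs' Ft' [l [Fl l_neq0 eq_C]].
have [] := v_free (a0 := s ^+ 3 - l * s' ^+ 3) (a1 := s ^+ 2 * t - l * (s' ^+ 2 * t'))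
    (a2 := s * t ^+ 2 - l * (s' * t' ^+ 2)) (a3 := t ^+ 3 - l * t' ^+ 3);
  rewrite ?inFqB ?inFqM ?inFqX //.
  rewrite -(subrr (C s t)) {2}eq_C; apply/rowP => i; rewrite !mxE.
  by move: (v0 0 i) (v1 0 i) (v2 0 i) (v3 0 i) => x0 x1 x2 x3; ring.
move=> /eqP; rewrite subr_eq0 => /eqP e0 /eqP; rewrite subr_eq0 => /eqP e1 _ _.
have [s0|s_neq0] := eqVneq s 0.
  move: e0; rewrite s0 expr0n /= => /esym/eqP; rewrite mulf_eq0 (negbTE l_neq0) expf_eq0 /=.
  by move/eqP->; rewrite mulr0 mul0r.
apply/eqP; rewrite eq_sym -subr_eq0; apply/eqP/(mulfI (expf_neq0 2 s_neq0)).
rewrite mulr0 (_ : s ^+ 2 * _ = s ^+ 2 * t * s' - s ^+ 3 * t'); last by ring.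
by rewrite e0 e1; ring.
Qed.

Lemma cubic_theta_det2_neq0 s t s' t' z z' :
  inFq q s -> inFq q t -> inFq q s' -> inFq q t' -> s * t' != t * s' ->
  z != (0, 0) -> z' != (0, 0) ->
  same_point q (C s t) (theta_vec q z) -> same_point q (C s' t') (theta_vec q z') ->
  det2 z z' != 0.
Proof.
move=> Fs Ft Fs' Ft' st_neq z_neq0 z'_neq0 Cz Cz'; apply: contra st_neq => /eqP d0.
apply/eqP/(cubic_vec_same_point Fs Ft Fs' Ft'); apply: (same_point_trans Cz).
by rewrite (theta_vec_det2 z_neq0 z'_neq0 d0); apply: same_point_sym.
Qed.

Section Normalized.
Hypothesis q_ge4 : (4 <= q)%N.
Hypothesis C_in_O1 :
  forall s t, inFq q s -> inFq q t -> (s, t) != (0, 0) -> in_O1 q (C s t).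
Hypothesis C10 : same_point q (C 1 0) (theta_aff 0).
Hypothesis C01 : same_point q (C 0 1) (u1vec 0 0 0 1).
Hypothesis C11 : same_point q (C 1 1) (theta_aff 1).

Lemma cubic_affine_inj u u' v : inFq q u -> inFq q u' ->
  same_point q (C 1 u) v -> same_point q (C 1 u') v -> u = u'.
Proof.
move=> Fu Fu' Cu_v Cu'_v; apply/esym.
have := cubic_vec_same_point inFq1 Fu inFq1 Fu' (same_point_trans Cu_v (same_point_sym Cu'_v)).
by rewrite mul1r mulr1.
Qed.

Lemma cubic_affine u : inFq q u ->
  exists l t, [/\ inFq q l, l != 0 & C 1 u = l *: theta_aff t].
Proof.
move=> Fu; have [z [_]] := C_in_O1 inFq1 Fu (pair1_neq0 u).
rewrite theta_vecE; case: ifP => [_ Cu_inf|_ [l [Fl l_neq0 ->]]]; last by exists l, (z.2 / z.1).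
have := cubic_vec_same_point inFq1 Fu inFq0 inFq1 (same_point_trans Cu_inf (same_point_sym C01)).
by rewrite mulr1 mulr0 => /eqP; rewrite oner_eq0.
Qed.

Lemma cubic_affine_combination u0 u1 l0 l1 t s :
  u0 \notin [:: 0; 1] -> inFq q u0 -> inFq q u1 -> inFq q l0 -> inFq q l1 -> l1 != 0 ->
  C 1 u0 = l0 *: theta_aff t -> C 1 u1 = l1 *: theta_aff s ->
  exists g h, [/\ inFq q g, inFq q h, s = g + h * t
                & frob s * frob (frob s) = g + h * (frob t * frob (frob t))].
Proof.
rewrite !inE => /norP[u0_neq0 u0_neq1] Fu0 Fu1 Fl0 Fl1 l1_neq0 e0 e1.
have [k1 [Fk1 _ e10]] := C10; have [k2 [Fk2 _ e01]] := C01; have [k3 [Fk3 _ e11]] := C11.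
have [Fc1 Fc2 Fc3 Fc4] := span_coef_inFq Fu0 inFq1 Fu1.
have F1 := inFqM Fc1 Fk1; have F2 := inFqM Fc2 Fk2.
have F3 := inFqM Fc3 Fk3; have F4 := inFqM Fc4 Fl0.
move: (cubic_vec_span v0 v1 v2 v3 u0_neq0 u0_neq1 1 u1).
rewrite e0 e1 e10 e01 e11 theta_aff0 theta_aff1 /theta_aff !scalerA !u1vecZ //.
rewrite !u1vecD => /u1vec_inj[_ eb ec _].
exists (span_coef3 u0 1 u1 * k3 / l1), (span_coef4 u0 1 u1 * l0 / l1).
split; [exact: inFq_div F3 Fl1 | exact: inFq_div F4 Fl1 | |].
  by apply: (mulfI l1_neq0); rewrite eb; field.
by apply: (mulfI l1_neq0); rewrite ec; field.
Qed.

Lemma cubic_affine_param_inFq u0 u1 l0 t :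
  u0 \notin [:: 0; 1] -> u1 \notin [:: 0; 1] -> u0 != u1 -> inFq q u0 -> inFq q u1 ->
  inFq q l0 -> l0 != 0 -> C 1 u0 = l0 *: theta_aff t -> inFq q t.
Proof.
move=> u0_out u1_out u0_neq_u1 Fu0 Fu1 Fl0 l0_neq0 e0; apply/contraT => Ft.
have [l1 [s [Fl1 l1_neq0 e1]]] := cubic_affine Fu1.
have [g [h [Fg Fh s_def frob_s]]] :=
  cubic_affine_combination u0_out Fu0 Fu1 Fl0 Fl1 l1_neq0 e0 e1.
have C1u0 : same_point q (C 1 u0) (theta_aff t) by rewrite e0; apply: same_pointZ.
have C1u1 : same_point q (C 1 u1) (theta_aff s) by rewrite e1; apply: same_pointZ.
rewrite s_def in C1u1 frob_s; move: C1u1.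
have [[-> ->]|[-> ->]|[-> ->]] := frob2_affine_cases Fg Fh Ft frob_s.
- rewrite mul0r addr0 => /(cubic_affine_inj Fu1 inFq0)/(_ C10) u1_0.
  by move: u1_out; rewrite u1_0 inE eqxx.
- rewrite mul1r add0r => /(cubic_affine_inj Fu1 Fu0)/(_ C1u0) u1_u0.
  by move: u0_neq_u1; rewrite u1_u0 eqxx.
- rewrite mul0r addr0 => /(cubic_affine_inj Fu1 inFq1)/(_ C11) u1_1.
  by move: u1_out; rewrite u1_1 !inE eqxx orbT.
Qed.

Lemma cubic_Fq_rational s t : inFq q s -> inFq q t -> Fq_rational (C s t).
Proof.
move=> Fs Ft; have [u0 [u1 [Fu0 Fu1 u0_out u1_out u0_neq_u1]]] := Fq_two_points q_ge4.
have [l0 [t0 [Fl0 l0_neq0 e0]]] := cubic_affine Fu0.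
have Ft0 := cubic_affine_param_inFq u0_out u1_out u0_neq_u1 Fu0 Fu1 Fl0 l0_neq0 e0.
move: u0_out; rewrite !inE => /norP[u0_neq0 u0_neq1].
have [Fc1 Fc2 Fc3 Fc4] := span_coef_inFq Fu0 Fs Ft.
rewrite (cubic_vec_span _ _ _ _ u0_neq0 u0_neq1) e0.
have [k1 [Fk1 _ ->]] := C10; have [k2 [Fk2 _ ->]] := C01; have [k3 [Fk3 _ ->]] := C11.
apply: Fq_rationalD; first apply: Fq_rationalD; first apply: Fq_rationalD.
all: do 2 apply: Fq_rationalZ => //.
- exact/Fq_rational_theta_aff/inFq0.
- by exists 0, 0, 0, 1; rewrite inFq0 inFq1.
- exact/Fq_rational_theta_aff/inFq1.
- exact: Fq_rational_theta_aff.
Qed.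

Lemma cubic_on_theta_Fq s t : inFq q s -> inFq q t -> (s, t) != (0, 0) ->
  exists z, [/\ inFq q z.1, inFq q z.2, z != (0, 0) & same_point q (C s t) (theta_vec q z)].
Proof.
move=> Fs Ft st_neq0; have [z [_ Cst_z]] := C_in_O1 Fs Ft st_neq0.
have [z' [Fz'1 Fz'2 z'_neq0 eq_z']] := Fq_rational_theta_vec (cubic_Fq_rational Fs Ft) Cst_z.
by exists z'; rewrite eq_z'.
Qed.

Lemma cubic_affine_Fq u : inFq q u ->
  exists l t, [/\ inFq q l, l != 0, inFq q t & C 1 u = l *: theta_aff t].
Proof.
move=> Fu; have [l [t [Fl l_neq0 e]]] := cubic_affine Fu.
exists l, t; split=> //; apply: (theta_aff_Fq_rational Fl l_neq0).
by rewrite -e; apply: cubic_Fq_rational inFq1 Fu.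
Qed.

Lemma theta_Fq_on_cubic z : inFq q z.1 -> inFq q z.2 -> z != (0, 0) ->
  exists s t, [/\ inFq q s, inFq q t, (s, t) != (0, 0) & same_point q (C s t) (theta_vec q z)].
Proof.
move=> Fz1 Fz2 _; rewrite theta_vecE; case: ifP => [_|z1_neq0].
  by exists 0, 1; rewrite inFq0 inFq1 pair01_neq0.
have Ft0 : inFq q (z.2 / z.1) by apply: inFq_div.
(* reads t off [C 1 u = l *: theta_aff t] from the coordinates [l * t] and [l] *)
pose param u := C 1 u 0 (inord 4) / C 1 u 0 0.
have paramE u l t : l != 0 -> C 1 u = l *: theta_aff t -> param u = t.
  by move=> l_neq0 e; rewrite /param e !mxE inordK //= mulr1 mulrC mulKf.
pose A := [set u : F | inFq q u].
have param_A : {in A, forall u, exists l, [/\ inFq q l, l != 0, param u \in A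
                                           & C 1 u = l *: theta_aff (param u)]}.
  move=> u; rewrite inE => /cubic_affine_Fq[l [t [Fl l_neq0 Ft e]]].
  by exists l; rewrite (paramE _ _ _ l_neq0 e) inE.
have param_inj : {in A &, injective param}.
  move=> u u' Au Au' eq_param.
  have [l [Fl l_neq0 _ e]] := param_A u Au; have [l' [Fl' l'_neq0 _ e']] := param_A u' Au'.
  rewrite !inE in Au Au'; apply: (cubic_affine_inj (v := theta_aff (param u)) Au Au').
    by rewrite e; apply: same_pointZ.
  by rewrite e' -eq_param; apply: same_pointZ.
have : z.2 / z.1 \in param @: A.
  suff -> : param @: A = A by rewrite inE.
  apply/eqP; rewrite eqEcard card_in_imset // leqnn andbT.
  by apply/subsetP => _ /imsetP[u Au ->]; have [l [_ _ ? _]] := param_A u Au.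
case/imsetP => u Au ->; have [l [Fl l_neq0 _ e]] := param_A u Au.
rewrite inE in Au; exists 1, u; rewrite inFq1 pair1_neq0 e; split=> //.
exact: same_pointZ.
Qed.

End Normalized.

End TwistedCubic.

Lemma unitmx_tensor3 M : M \in unitmx -> tensor3_mx M \in unitmx.
Proof. by move=> M_unit; case: (mulmx1_unit (tensor3_mxV M_unit)). Qed.

Lemma same_point_tensor3V M v z : M \in unitmx -> z != (0, 0) ->
  same_point q v (theta_vec q (mob M z.1 z.2)) ->
  same_point q (v *m tensor3_mx (invmx M)) (theta_vec q z).
Proof.
move=> M_unit z_neq0 /(same_point_mulmx (tensor3_mx (invmx M))) v_z.
apply: (same_point_trans v_z).
have -> : theta_vec q z = theta_vec q (mob (M *m invmx M) z.1 z.2).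
  by rewrite mulmxV // mob1 -surjective_pairing.
rewrite -mob_mulmx.
by apply: theta_vec_tensor3; rewrite ?unitmx_inv ?mob_eq0 -?surjective_pairing.
Qed.

Section Framing.
Variables v0 v1 v2 v3 : 'rV[F]_8.
Hypothesis v_free : Fq_indep4 q v0 v1 v2 v3.
Hypothesis cubic_sub_O1 : forall u, on_cubic q v0 v1 v2 v3 u -> in_O1 q u.
Local Notation C := (cubic_vec v0 v1 v2 v3).

Lemma cubic_in_O1 s t : inFq q s -> inFq q t -> (s, t) != (0, 0) -> in_O1 q (C s t).
Proof.
by move=> Fs Ft st_neq0; apply: cubic_sub_O1; exists s, t; split=> //; apply: same_point_refl.
Qed.

Lemma cubic_frame : exists M, [/\ M \in unitmx,
  same_point q (C 1 0) (theta_vec q (mob M 1 0)), same_point q (C 0 1) (theta_vec q (mob M 0 1))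
  & same_point q (C 1 1) (theta_vec q (mob M 1 1))].
Proof.
have [w1 [w1_neq0 Cw1]] := cubic_in_O1 inFq1 inFq0 (pair1_neq0 0).
have [w2 [w2_neq0 Cw2]] := cubic_in_O1 inFq0 inFq1 pair01_neq0.
have [w3 [w3_neq0 Cw3]] := cubic_in_O1 inFq1 inFq1 (pair1_neq0 1).
have d12 : det2 w1 w2 != 0.
  by apply: (cubic_theta_det2_neq0 v_free _ _ _ _ _ w1_neq0 w2_neq0 Cw1 Cw2);
    rewrite ?inFq0 ?inFq1 // mul1r mul0r oner_eq0.
have d32 : det2 w3 w2 != 0.
  by apply: (cubic_theta_det2_neq0 v_free _ _ _ _ _ w3_neq0 w2_neq0 Cw3 Cw2);
    rewrite ?inFq0 ?inFq1 // mulr1 mulr0 oner_eq0.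
have d13 : det2 w1 w3 != 0.
  by apply: (cubic_theta_det2_neq0 v_free _ _ _ _ _ w1_neq0 w3_neq0 Cw1 Cw3);
    rewrite ?inFq0 ?inFq1 // mulr1 mul0r oner_eq0.
have [M [M_unit d1 d2 M11]] := mob_frame d12 d32 d13.
exists M; rewrite M11; split=> //.
- by rewrite (theta_vec_det2 _ w1_neq0 d1) ?mob_eq0 ?pair1_neq0.
- by rewrite (theta_vec_det2 _ w2_neq0 d2) ?mob_eq0 ?pair01_neq0.
Qed.

Section Framed.
Variable M : 'M[F]_2.
Hypothesis M_unit : M \in unitmx.
Hypothesis C10 : same_point q (C 1 0) (theta_vec q (mob M 1 0)).
Hypothesis C01 : same_point q (C 0 1) (theta_vec q (mob M 0 1)).
Hypothesis C11 : same_point q (C 1 1) (theta_vec q (mob M 1 1)).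
Local Notation K := (tensor3_mx (invmx M)).
Local Notation D := (cubic_vec (v0 *m K) (v1 *m K) (v2 *m K) (v3 *m K)).

Lemma framed_cubicE s t : C s t = D s t *m tensor3_mx M.
Proof. by rewrite -cubic_vec_mulmx -mulmxA tensor3_mxM mulVmx // tensor3_mx1 mulmx1. Qed.

Lemma on_cubic_iff_theta_subline u : (4 <= q)%N ->
  on_cubic q v0 v1 v2 v3 u <-> on_theta_subline q M u.
Proof.
move=> q_ge4; have K_unit : K \in unitmx by rewrite unitmx_tensor3 ?unitmx_inv.
have D_free := Fq_indep4_mulmx K_unit v_free.
have D_O1 s t : inFq q s -> inFq q t -> (s, t) != (0, 0) -> in_O1 q (D s t).
  move=> Fs Ft st_neq0; have [z [z_neq0 Cz]] := cubic_in_O1 Fs Ft st_neq0.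
  exists (mob (invmx M) z.1 z.2); rewrite mob_eq0 ?unitmx_inv // -surjective_pairing.
  split=> //; rewrite -cubic_vec_mulmx; apply: (same_point_trans (same_point_mulmx _ Cz)).
  by apply: theta_vec_tensor3; rewrite ?unitmx_inv.
have D10 : same_point q (D 1 0) (theta_aff 0).
  by rewrite -theta_vec_aff -cubic_vec_mulmx; apply: same_point_tensor3V; rewrite ?pair1_neq0.
have D01 : same_point q (D 0 1) (u1vec 0 0 0 1).
  by rewrite -theta_vec_inf -cubic_vec_mulmx; apply: same_point_tensor3V; rewrite ?pair01_neq0.
have D11 : same_point q (D 1 1) (theta_aff 1).
  by rewrite -theta_vec_aff -cubic_vec_mulmx; apply: same_point_tensor3V; rewrite ?pair1_neq0.
split=> -[s [t [Fs Ft st_neq0 u_st]]].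
  have [z [Fz1 Fz2 z_neq0 D_z]] := cubic_on_theta_Fq D_free q_ge4 D_O1 D10 D01 D11 Fs Ft st_neq0.
  exists z.1, z.2; rewrite -surjective_pairing; split=> //.
  apply: (same_point_trans u_st); rewrite framed_cubicE.
  exact: same_point_trans (same_point_mulmx _ D_z) (theta_vec_tensor3 M_unit z_neq0).
have [s' [t' [Fs' Ft' st'_neq0 D_st]]] :=
  theta_Fq_on_cubic D_free q_ge4 D_O1 D10 D01 D11 (z := (s, t)) Fs Ft st_neq0.
exists s', t'; split=> //; apply: (same_point_trans u_st); rewrite framed_cubicE.
exact/same_point_sym/(same_point_trans (same_point_mulmx _ D_st))/theta_vec_tensor3.
Qed.

End Framed.
End Framing.
End FiniteField.

Theorem mainTheorem4 (F : finFieldType) (q : nat)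
  (hq : exists p k : nat, [/\ prime p, (0 < k)%N & q = (p ^ k)%N])
  (hF : #|F| = (q ^ 3)%N) (hq4 : (4 <= q)%N)
  (v0 v1 v2 v3 : 'rV[F]_8)
  (hcub : twisted_cubic_basis q v0 v1 v2 v3)
  (hsub : forall u : 'rV[F]_8, on_cubic q v0 v1 v2 v3 u -> in_O1 q u) :
  exists M : 'M[F]_2, M \in unitmx /\
    (forall u : 'rV[F]_8, inU1 q u -> u != 0 ->
       (on_cubic q v0 v1 v2 v3 u <-> on_theta_subline q M u)).
Proof.
case: hcub => _ _ _ _ v_free.
have [M [M_unit C10 C01 C11]] := cubic_frame hq hF v_free hsub.
exists M; split=> // u _ _.
exact: (on_cubic_iff_theta_subline hq hF v_free hsub M_unit C10 C01 C11 u hq4).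
Qed.
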